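(* Let $W$ be a binary-input cq channel, $N=2^n$, $\mathcal A\subset\{1,\dots,N\}$ with $|\mathcal A|=K$. Then $$P_e(N,K,\mathcal A)\le 2\sqrt{\sum_{i\in\mathcal A}\tfrac12\sqrt{F(W_N^{(i)})}}.$$ Consequently, for each $(N,K,\mathcal A)$ there exists a frozen vector $u_{\mathcal A^c}\in\{0,1\}^{\mathcal A^c}$ with $P_e(N,K,\mathcal A,u_{\mathcal A^c})\le 2\sqrt{\sum_{i\in\mathcal A}\tfrac12\sqrt{F(W_N^{(i)})}}$.
   Context: A binary-input cq channel $W$ assigns to $x\in\{0,1\}$ a density operator $\rho_x$ on a finite-dimensional Hilbert space; for $V:x\mapsto\sigma_x$, $F(V)=\|\sqrt{\sigma_0}\sqrt{\sigma_1}\|_1^2$. Channel combining: for $N=2^n$ define $\rho_{u^N}$ on $B^N=B_1\cdots B_N$ recursively by $\rho_{u_1}=\rho_{u_1}$ ($N=1$) and $\rho_{u^{2N}}=\rho^{B_1\cdots B_N}_{u_o\oplus u_e}\otimes\rho^{B_{N+1}\cdots B_{2N}}_{u_e}$ with $u_o=(u_1,u_3,\dots)$, $u_e=(u_2,u_4,\dots)$. Let $\overline\rho_{u_1^i}=\sum_{u_{i+1}^N}2^{-(N-i)}\rho_{u^N}$, and the split channel $W_N^{(i)}:u_i\mapsto\sum_{u_1^{i-1}}2^{-(i-1)}|u_1^{i-1}\rangle\langle u_1^{i-1}|\otimes\overline\rho_{u_1^i}$ (classical register $U_1^{i-1}$ with orthonormal basis $\{|u_1^{i-1}\rangle\}$).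 Decoder projectors: for $i\in\mathcal A$, $\Pi_{(i),u_1^{i-1}0}=\{\sqrt{\overline\rho_{u_1^{i-1}0}}-\sqrt{\overline\rho_{u_1^{i-1}1}}\ge0\}$ and $\Pi_{(i),u_1^{i-1}1}=I-\Pi_{(i),u_1^{i-1}0}$, where $\{B\ge0\}$ is the projector onto the span of eigenvectors of the Hermitian $B$ with nonnegative eigenvalues; for $i\notin\mathcal A$ (frozen positions), $\Pi_{(i),u_1^{i-1}u_i}=I$. With $\Pi_i:=\Pi_{(i),u_1^{i-1}u_i}$ (depending on $u^N$), the error probability for frozen vector $u_{\mathcal A^c}$ is $P_e(N,K,\mathcal A,u_{\mathcal A^c})=1-2^{-K}\sum_{u_{\mathcal A}}\mathrm{Tr}\{\Pi_N\cdots\Pi_1\rho_{u^N}\Pi_1\cdots\Pi_N\}$, where $u^N$ is assembled from $u_{\mathcal A}$ and $u_{\mathcal A^c}$; and $P_e(N,K,\mathcal A)=2^{-(N-K)}\sum_{u_{\mathcal A^c}}P_e(N,K,\mathcal A,u_{\mathcal A^c})=1-2^{-N}\sum_{u^N}\mathrm{Tr}\{\Pi_N\cdots\Pi_1\rho_{u^N}\Pi_1\cdots\Pi_N\}$. *)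

(* Complex scalars are modelled by an arbitrary
   numClosedFieldType C (e.g. the complex numbers). *)
From HB Require Import structures.
From mathcomp Require Import all_boot all_order all_algebra.
Set Implicit Arguments.
Unset Strict Implicit.
Unset Printing Implicit Defensive.
Import Order.TTheory GRing.Theory Num.Theory.
Local Open Scope ring_scope.

Definition adjmx (C : numClosedFieldType) m n (A : 'M[C]_(m, n)) : 'M[C]_(n, m) :=
  (map_mx Num.conj A)^T.

Definition psdmx (C : numClosedFieldType) d (A : 'M[C]_d) : Prop :=
  adjmx A = A /\ forall v : 'rV[C]_d, 0 <= (v *m A *m adjmx v) 0 0.

Definition densitymx (C : numClosedFieldType) d (A : 'M[C]_d) : Prop :=
  psdmx A /\ \tr A = 1.

(* functional calculus for normal matrices via the spectral decomposition
   A = P^-1 diag(lambda) P  (P unitary) of mathcomp's spectral.v *)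
Definition fun_mx (C : numClosedFieldType) d (f : C -> C) (A : 'M[C]_d) : 'M[C]_d :=
  invmx (spectralmx A) *m diag_mx (map_mx f (spectral_diag A)) *m spectralmx A.

Definition sqrtmx (C : numClosedFieldType) d (A : 'M[C]_d) : 'M[C]_d :=
  fun_mx (fun x : C => sqrtC x) A.

Definition nonneg_proj (C : numClosedFieldType) d (B : 'M[C]_d) : 'M[C]_d :=
  fun_mx (fun x : C => if 0 <= x then 1 else 0) B.

Definition trnorm (C : numClosedFieldType) d (X : 'M[C]_d) : C :=
  \tr (sqrtmx (adjmx X *m X)).

Definition Fid (C : numClosedFieldType) d (s : bool -> 'M[C]_d) : C :=
  trnorm (sqrtmx (s false) *m sqrtmx (s true)) ^+ 2.

(* Kronecker product; index k of 'I_(m1*m2) <-> pair (i1,i2), lexicographic *)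
Definition tensmx (C : numClosedFieldType) m1 n1 m2 n2
    (A : 'M[C]_(m1, n1)) (B : 'M[C]_(m2, n2)) : 'M[C]_(m1 * m2, n1 * n2) :=
  \matrix_(k, l)
    (let p := enum_val (cast_ord (esym (@mxvec_cast m1 m2)) k) in
     let q := enum_val (cast_ord (esym (@mxvec_cast n1 n2)) l) in
     A p.1 q.1 * B p.2 q.2).

(* dimension of B^N for N = 2^n copies of a d-dimensional system:
   dimN d n = d^(2^n) *)
Fixpoint dimN (d n : nat) : nat :=
  if n is n'.+1 then (dimN d n' * dimN d n')%N else d.

(* channel combining: rho_{u^N}, N = 2^n; bit sequences are 0-indexed
   (u k = paper's u_{k+1}); u_o = even 0-indexed positions, u_e = odd ones *)
Fixpoint rhoN (C : numClosedFieldType) d (W : bool -> 'M[C]_d) (n : nat)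
  : (nat -> bool) -> 'M[C]_(dimN d n) :=
  match n return (nat -> bool) -> 'M[C]_(dimN d n) with
  | 0 => fun u => W (u 0%N)
  | n'.+1 => fun u =>
      tensmx (rhoN W n' (fun k => u k.*2 (+) u k.*2.+1))
             (rhoN W n' (fun k => u k.*2.+1))
  end.

Definition bits_of (N : nat) (v : {ffun 'I_N -> bool}) : nat -> bool :=
  fun k => if (insub k : option 'I_N) is Some i then v i else false.

Definition rho (C : numClosedFieldType) d (W : bool -> 'M[C]_d) (n : nat)
  (u : {ffun 'I_(2 ^ n) -> bool}) : 'M[C]_(dimN d n) := rhoN W n (bits_of u).

(* overline rho_{u_1^len}: average over u_{len+1}^N of rho_{u^N}, where the
   prefix (0-indexed positions k < len) is given by pre *)
Definition rhobar (C : numClosedFieldType) d (W : bool -> 'M[C]_d) (n : nat)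
  (len : nat) (pre : nat -> bool) : 'M[C]_(dimN d n) :=
  ((2 ^ (2 ^ n - len))%:R)^-1 *:
    \sum_(v : {ffun 'I_(2 ^ n) -> bool} |
            [forall k : 'I_(2 ^ n), (k < len)%N ==> (v k == pre k)])
      rho W v.

(* the (0-indexed) bit j of k, used to label the classical register *)
Definition bit_of (k j : nat) : bool := odd (k %/ 2 ^ j).

(* split channel W_N^{(i+1)} (0-indexed position i): on input b it outputs
   sum_{u_1^i} 2^-i |u_1^i><u_1^i| (x) overline rho_{u_1^i b};
   the register basis vectors |u_1^i> are labelled by k : 'I_(2^i)
   via the binary expansion of k *)
Definition split_chan (C : numClosedFieldType) d (W : bool -> 'M[C]_d) (n : nat)
  (i : 'I_(2 ^ n)) (b : bool) : 'M[C]_(2 ^ i * dimN d n) :=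
  \sum_(k < 2 ^ i)
    ((2 ^ i)%:R)^-1 *:
      tensmx (delta_mx k k)
        (rhobar W n i.+1 (fun j => if j == nat_of_ord i then b else bit_of k j)).

(* decoder projector Pi_{(i+1), u_1^i u_{i+1}} (0-indexed position i),
   for information set A *)
Definition dec_proj (C : numClosedFieldType) d (W : bool -> 'M[C]_d) (n : nat)
  (A : {set 'I_(2 ^ n)}) (u : {ffun 'I_(2 ^ n) -> bool}) (i : 'I_(2 ^ n))
  : 'M[C]_(dimN d n) :=
  if i \in A then
    let pre b := fun j : nat => if j == nat_of_ord i then b else bits_of u j in
    let P0 := nonneg_proj (sqrtmx (rhobar W n i.+1 (pre false))
                           - sqrtmx (rhobar W n i.+1 (pre true))) in
    if u i then 1%:M - P0 else P0
  else 1%:M.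

(* Pi_N ... Pi_1 *)
Definition proj_seq_left (C : numClosedFieldType) d (W : bool -> 'M[C]_d) (n : nat)
  (A : {set 'I_(2 ^ n)}) (u : {ffun 'I_(2 ^ n) -> bool}) : 'M[C]_(dimN d n) :=
  foldl (fun M i => dec_proj W A u i *m M) 1%:M (enum 'I_(2 ^ n)).

(* Pi_1 ... Pi_N *)
Definition proj_seq_right (C : numClosedFieldType) d (W : bool -> 'M[C]_d) (n : nat)
  (A : {set 'I_(2 ^ n)}) (u : {ffun 'I_(2 ^ n) -> bool}) : 'M[C]_(dimN d n) :=
  foldr (fun i M => dec_proj W A u i *m M) 1%:M (enum 'I_(2 ^ n)).

Definition succ_term (C : numClosedFieldType) d (W : bool -> 'M[C]_d) (n : nat)
  (A : {set 'I_(2 ^ n)}) (u : {ffun 'I_(2 ^ n) -> bool}) : C :=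
  \tr (proj_seq_left W A u *m rho W u *m proj_seq_right W A u).

(* P_e(N,K,A,u_{A^c}); the frozen vector is given as a full vector uf whose
   entries on A are ignored; u^N ranges over vectors agreeing with uf off A *)
Definition Pe_frozen (C : numClosedFieldType) d (W : bool -> 'M[C]_d) (n K : nat)
  (A : {set 'I_(2 ^ n)}) (uf : {ffun 'I_(2 ^ n) -> bool}) : C :=
  1 - ((2 ^ K)%:R)^-1 *
      \sum_(u : {ffun 'I_(2 ^ n) -> bool} |
              [forall k : 'I_(2 ^ n), (k \notin A) ==> (u k == uf k)])
        succ_term W A u.

Definition Pe (C : numClosedFieldType) d (W : bool -> 'M[C]_d) (n K : nat)
  (A : {set 'I_(2 ^ n)}) : C :=
  1 - ((2 ^ (2 ^ n))%:R)^-1 * \sum_(u : {ffun 'I_(2 ^ n) -> bool}) succ_term W A u.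

Definition Pe_bound (C : numClosedFieldType) d (W : bool -> 'M[C]_d) (n : nat)
  (A : {set 'I_(2 ^ n)}) : C :=
  2 * sqrtC (\sum_(i in A) 2^-1 * sqrtC (Fid (split_chan W i))).

From HB Require Import structures.
From mathcomp Require Import all_boot all_order all_algebra.
From mathcomp Require Import spectral sesquilinear ring.
Set Implicit Arguments.
Unset Strict Implicit.
Unset Printing Implicit Defensive.
Import Order.TTheory GRing.Theory Num.Theory.
Local Open Scope ring_scope.

(* The argument has three matrix-analytic ingredients, proved for arbitrary
   finite-dimensional matrices over a numClosedFieldType C (e.g. the complex
   numbers):
   - Gao's sequential ("noncommutative union") bound: for a density rho and
     orthogonal projectors Pi_1..Pi_s,
       1 - Tr(Pi_s..Pi_1 rho Pi_1..Pi_s) <= 4 sum_i Tr((1 - Pi_i) rho);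
   - the Holevo-Helstrom bound: the projector P = {sqrt R0 - sqrt R1 >= 0}
     errs with total weight Tr((1-P)R0) + Tr(P R1) <= ||sqrt R0 sqrt R1||_1;
   - the trace norm of a block-diagonal matrix is the sum over the blocks,
     which expresses sqrt F(W_N^(i)) as an average over the prefixes u_1^(i-1).
   Then, for each information position i, averaging Tr((1-Pi_i) rho_u) over u
   may replace rho_u by the partial average rhobar_(u_1^i) (Pi_i depends only on
   u_1^i); pairing u with the vector whose i-th bit is flipped turns the sum
   into Holevo-Helstrom errors, so the average is <= (1/2) sqrt F(W_N^(i)).
   Summing over i gives P_e <= 4 s with s = sum_(i in A) (1/2) sqrt F(W_N^(i));
   together with P_e <= 1 this yields P_e <= 2 sqrt s.  Finally P_e is the
   average of the P_e(u_frozen), so some frozen vector does at least as well. *)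

Section Adjoint.
Variable C : numClosedFieldType.

Lemma adjmxE m n (A : 'M[C]_(m, n)) : adjmx A = (A ^t*)%sesqui.
Proof. by rewrite /adjmx map_trmx. Qed.

Lemma adjmxK m n (A : 'M[C]_(m, n)) : adjmx (adjmx A) = A.
Proof. by rewrite !adjmxE trmxCK. Qed.

Lemma adjmxM m n p (A : 'M[C]_(m, n)) (B : 'M[C]_(n, p)) :
  adjmx (A *m B) = adjmx B *m adjmx A.
Proof. by rewrite /adjmx map_mxM trmx_mul. Qed.

Lemma adjmxD m n (A B : 'M[C]_(m, n)) : adjmx (A + B) = adjmx A + adjmx B.
Proof. by rewrite /adjmx map_mxD linearD. Qed.

Lemma adjmxN m n (A : 'M[C]_(m, n)) : adjmx (- A) = - adjmx A.
Proof. by rewrite /adjmx map_mxN linearN. Qed.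

Lemma adjmxB m n (A B : 'M[C]_(m, n)) : adjmx (A - B) = adjmx A - adjmx B.
Proof. by rewrite adjmxD adjmxN. Qed.

Lemma adjmxZ m n (a : C) (A : 'M[C]_(m, n)) : adjmx (a *: A) = a^* *: adjmx A.
Proof. by apply/matrixP=> i j; rewrite !mxE rmorphM. Qed.

Lemma adjmx0 m n : adjmx (0 : 'M[C]_(m, n)) = 0.
Proof. by rewrite /adjmx map_mx0 trmx0. Qed.

Lemma adjmx1 n : adjmx (1%:M : 'M[C]_n) = 1%:M.
Proof. by rewrite /adjmx map_mx1 trmx1. Qed.

Lemma adjmx_sum m n I (r : seq I) (P : pred I) (F : I -> 'M[C]_(m, n)) :
  adjmx (\sum_(i <- r | P i) F i) = \sum_(i <- r | P i) adjmx (F i).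
Proof. exact: (big_morph (@adjmx C m n) (@adjmxD m n) (@adjmx0 m n)). Qed.

Lemma adjmx_diag n (d : 'rV[C]_n) : adjmx (diag_mx d) = diag_mx (map_mx Num.conj d).
Proof. by rewrite /adjmx map_diag_mx tr_diag_mx. Qed.

Definition unitary n (U : 'M[C]_n) : Prop :=
  U *m adjmx U = 1%:M /\ adjmx U *m U = 1%:M.

Definition hermitian n (A : 'M[C]_n) : Prop := adjmx A = A.

Lemma spectral_unitary n (A : 'M[C]_n) : unitary (spectralmx A).
Proof.
have Uu := spectral_unitarymx A; have Uinv := invmx_unitary Uu.
by rewrite /unitary adjmxE -Uinv mulmxV ?mulVmx // unitarymx_unit.
Qed.

Lemma hermitian_hermsym n (A : 'M[C]_n) : hermitian A -> A \is hermsymmx.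
Proof.
move=> hA; apply/eqP; rewrite expr0 scale1r -[LHS]hA adjmxE.
by apply/matrixP=> i j; rewrite !mxE.
Qed.

Lemma hermitian_spectral n (A : 'M[C]_n) : hermitian A ->
  A = adjmx (spectralmx A) *m diag_mx (spectral_diag A) *m spectralmx A.
Proof.
move=> hA; have /hermitian_normalmx /orthomx_spectralP := hermitian_hermsym hA.
by rewrite invmx_unitary ?spectral_unitarymx // -adjmxE.
Qed.

Lemma hermitian_eig_real n (A : 'M[C]_n) i : hermitian A ->
  spectral_diag A 0 i \is Num.real.
Proof.
by move=> /hermitian_hermsym /hermitian_spectral_diag_real /mxOverP; apply.
Qed.

End Adjoint.

Section FunctionalCalculus.
Variable C : numClosedFieldType.

(* [spec_mx U d] is the matrix with eigenvalues [d] in the orthonormal basis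
   given by the rows of [U]; all matrices handled below are of this form. *)
Definition spec_mx n (U : 'M[C]_n) (d : 'rV[C]_n) : 'M[C]_n :=
  adjmx U *m diag_mx d *m U.

Lemma spec_mxM n (U : 'M[C]_n) d e : unitary U ->
  spec_mx U d *m spec_mx U e = spec_mx U (\row_j (d 0 j * e 0 j)).
Proof.
case=> UU _; rewrite /spec_mx.
have -> : adjmx U *m diag_mx d *m U *m (adjmx U *m diag_mx e *m U) =
  adjmx U *m (diag_mx d *m (U *m adjmx U) *m diag_mx e) *m U by rewrite !mulmxA.
by rewrite UU mulmx1 mulmx_diag.
Qed.

Lemma spec_mxB n (U : 'M[C]_n) d e : spec_mx U (d - e) = spec_mx U d - spec_mx U e.
Proof. by rewrite /spec_mx raddfB /= mulmxBr mulmxBl. Qed.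

Lemma spec_mxN n (U : 'M[C]_n) d : spec_mx U (- d) = - spec_mx U d.
Proof. by rewrite /spec_mx raddfN /= mulmxN mulNmx. Qed.

Lemma spec_mx_const n (U : 'M[C]_n) (a : C) : unitary U ->
  spec_mx U (const_mx a) = a%:M.
Proof.
by case=> _ UU; rewrite /spec_mx diag_const_mx mul_mx_scalar -scalemxAl UU scalemx1.
Qed.

Lemma adjmx_spec n (U : 'M[C]_n) d :
  adjmx (spec_mx U d) = spec_mx U (map_mx Num.conj d).
Proof. by rewrite /spec_mx !adjmxM adjmxK adjmx_diag mulmxA. Qed.

Lemma mxtrace_spec n (U : 'M[C]_n) d : unitary U -> \tr (spec_mx U d) = \sum_i d 0 i.
Proof.
case=> UU _; rewrite /spec_mx mxtrace_mulC mulmxA UU mul1mx /mxtrace.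
by apply: eq_bigr=> i _; rewrite mxE eqxx mulr1n.
Qed.

Lemma quad_spec n (U : 'M[C]_n) d (v : 'rV[C]_n) :
  (v *m spec_mx U d *m adjmx v) 0 0 = \sum_j d 0 j * `|(v *m adjmx U) 0 j| ^+ 2.
Proof.
set w := v *m adjmx U.
have -> : v *m spec_mx U d *m adjmx v = w *m diag_mx d *m adjmx w.
  by rewrite /w /spec_mx adjmxM adjmxK !mulmxA.
rewrite mul_mx_diag mxE; apply: eq_bigr => j _.
by rewrite !mxE normCK mulrCA mulrA.
Qed.

Lemma psd_spec n (U : 'M[C]_n) (d : 'rV[C]_n) :
  (forall i, 0 <= d 0 i) -> psdmx (spec_mx U d).
Proof.
move=> d0; split.
  rewrite adjmx_spec; congr spec_mx; apply/rowP=> i.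
  by rewrite mxE conj_Creal // ger0_real.
move=> v; rewrite quad_spec; apply: sumr_ge0 => j _.
by rewrite mulr_ge0 // exprn_ge0.
Qed.

(* Well-definedness of the functional calculus: two unitary
   diagonalisations of the same matrix give the same [f(A)], because a matrix
   intertwining [diag d] and [diag e] also intertwines [diag (f d)] and
   [diag (f e)]. *)
Lemma spec_mx_map n (U V : 'M[C]_n) d e (f : C -> C) :
  unitary U -> unitary V -> spec_mx U d = spec_mx V e ->
  spec_mx U (map_mx f d) = spec_mx V (map_mx f e).
Proof.
move=> [UU UU'] [VV VV'] eqUV; set X := V *m adjmx U.
have XD : X *m diag_mx d = diag_mx e *m X.
  have := congr1 (fun Y => V *m Y *m adjmx U) eqUV; rewrite /spec_mx /X /=.
  have -> : V *m (adjmx U *m diag_mx d *m U) *m adjmx U =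
     V *m adjmx U *m diag_mx d *m (U *m adjmx U) by rewrite !mulmxA.
  have -> : V *m (adjmx V *m diag_mx e *m V) *m adjmx U =
     (V *m adjmx V) *m diag_mx e *m (V *m adjmx U) by rewrite !mulmxA.
  by rewrite UU VV mulmx1 mul1mx.
have defX : X = V *m adjmx U by [].
clearbody X.
have XF : X *m diag_mx (map_mx f d) = diag_mx (map_mx f e) *m X.
  apply/matrixP=> i j; move/matrixP: XD => /(_ i j).
  rewrite !mul_mx_diag !mul_diag_mx !mxE.
  have [->|Xnz] := eqVneq (X i j) 0; first by move=> _; rewrite mulr0 mul0r.
  move=> h; have -> : d 0 j = e 0 i by apply: (mulIf Xnz); rewrite mulrC h.
  by rewrite mulrC.
rewrite /spec_mx.
have -> : adjmx U = adjmx V *m X by rewrite defX mulmxA VV' mul1mx.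
rewrite -[adjmx V *m X *m _]mulmxA XF defX !mulmxA -(mulmxA _ (adjmx U)).
by rewrite UU' mulmx1.
Qed.

Lemma fun_mx_spec n (A : 'M[C]_n) f U d : hermitian A -> unitary U ->
  A = spec_mx U d -> fun_mx f A = spec_mx U (map_mx f d).
Proof.
move=> hA uU eA; rewrite /fun_mx invmx_unitary ?spectral_unitarymx // -adjmxE.
apply: spec_mx_map => //; first exact: spectral_unitary.
by rewrite -eA /spec_mx -hermitian_spectral.
Qed.

Lemma fun_mx_hermitian n (A : 'M[C]_n) f : hermitian A ->
  fun_mx f A = spec_mx (spectralmx A) (map_mx f (spectral_diag A)).
Proof.
move=> hA; apply: fun_mx_spec => //; first exact: spectral_unitary.
exact: hermitian_spectral.
Qed.

End FunctionalCalculus.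

Section PositiveSemidefinite.
Variable C : numClosedFieldType.
Implicit Types m n : nat.

Lemma psd_hermitian n (A : 'M[C]_n) : psdmx A -> hermitian A.
Proof. by case. Qed.

Lemma quad_row m n (G : 'M[C]_n) (Z : 'M[C]_(m, n)) k :
  (row k Z *m G *m adjmx (row k Z)) 0 0 = (Z *m G *m adjmx Z) k k.
Proof.
rewrite !mxE; apply: eq_bigr => j _; rewrite !mxE; congr (_ * _).
by apply: eq_bigr=> l _; rewrite !mxE.
Qed.

(* A PSD matrix has nonnegative eigenvalues, the values of its quadratic
   form on the spectral basis. *)
Lemma psd_eig n (A : 'M[C]_n) i : psdmx A -> 0 <= spectral_diag A 0 i.
Proof.
move=> pA; have [UU _] := spectral_unitary A.
have := pA.2 (row i (spectralmx A)); rewrite quad_row.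
rewrite {2}(hermitian_spectral (psd_hermitian pA)) !mulmxA UU mul1mx -mulmxA UU.
by rewrite mulmx1 mxE eqxx mulr1n.
Qed.

Lemma psd_adj_mul m n (Y : 'M[C]_(m, n)) : psdmx (adjmx Y *m Y).
Proof.
split; first by rewrite adjmxM adjmxK.
move=> v; set w := v *m adjmx Y.
have -> : v *m (adjmx Y *m Y) *m adjmx v = w *m adjmx w.
  by rewrite /w adjmxM adjmxK !mulmxA.
by rewrite mxE sumr_ge0 // => k _; rewrite !mxE -normCK exprn_ge0.
Qed.

Lemma psdD n (A B : 'M[C]_n) : psdmx A -> psdmx B -> psdmx (A + B).
Proof.
move=> [hA pA] [hB pB]; split; first by rewrite adjmxD hA hB.
by move=> v; rewrite mulmxDr mulmxDl mxE addr_ge0.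
Qed.

Lemma psdZ n c (A : 'M[C]_n) : 0 <= c -> psdmx A -> psdmx (c *: A).
Proof.
move=> c0 [hA pA]; split; first by rewrite adjmxZ hA conj_Creal // ger0_real.
by move=> v; rewrite -scalemxAr -scalemxAl mxE mulr_ge0.
Qed.

Lemma psd_sum n I (r : seq I) (P : pred I) (F : I -> 'M[C]_n) :
  (forall i, P i -> psdmx (F i)) -> psdmx (\sum_(i <- r | P i) F i).
Proof.
move=> h; elim/big_rec: _ => [|i x Pi px]; last exact: psdD (h i Pi) px.
by split; [rewrite adjmx0 | move=> v; rewrite mulmx0 mul0mx mxE].
Qed.

(* [Z G Z^*] has nonnegative trace: its diagonal entries are values of the
   quadratic form of [G]. *)
Lemma tr_conj_psd m n (G : 'M[C]_n) (Z : 'M[C]_(m, n)) : psdmx G ->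
  0 <= \tr (Z *m G *m adjmx Z).
Proof. by move=> [_ pG]; rewrite /mxtrace sumr_ge0 // => k _; rewrite -quad_row. Qed.

Lemma psd_tr_ge0 n (G : 'M[C]_n) : psdmx G -> 0 <= \tr G.
Proof. by move=> /(tr_conj_psd 1%:M); rewrite adjmx1 mulmx1 mul1mx. Qed.

Lemma sqrtmx_spec n (A : 'M[C]_n) : psdmx A ->
  sqrtmx A = spec_mx (spectralmx A) (map_mx (fun x => sqrtC x) (spectral_diag A)).
Proof. by move=> [hA _]; rewrite /sqrtmx fun_mx_hermitian. Qed.

Lemma sqrtmx_psd n (A : 'M[C]_n) : psdmx A -> psdmx (sqrtmx A).
Proof.
move=> pA; rewrite sqrtmx_spec //; apply: psd_spec => i.
by rewrite mxE sqrtC_ge0 psd_eig.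
Qed.

Lemma sqrtmx_hermitian n (A : 'M[C]_n) : psdmx A -> hermitian (sqrtmx A).
Proof. by move=> /sqrtmx_psd []. Qed.

Lemma sqrtmx_sq n (A : 'M[C]_n) : psdmx A -> sqrtmx A *m sqrtmx A = A.
Proof.
move=> pA; rewrite sqrtmx_spec // spec_mxM; last exact: spectral_unitary.
rewrite [RHS](hermitian_spectral (psd_hermitian pA)); congr spec_mx.
by apply/rowP=> i; rewrite !mxE -expr2 sqrtCK.
Qed.

Lemma sqrtmx_unique n (S : 'M[C]_n) : psdmx S -> sqrtmx (S *m S) = S.
Proof.
move=> pS; have hS := psd_hermitian pS; have uV := spectral_unitary S.
have eS := hermitian_spectral hS.
have hSS : hermitian (S *m S) by rewrite /hermitian adjmxM hS.
have eSS : S *m S = spec_mx (spectralmx S)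
    (\row_j (spectral_diag S 0 j * spectral_diag S 0 j)).
  by rewrite -spec_mxM // /spec_mx -eS.
rewrite /sqrtmx (fun_mx_spec _ hSS uV eSS) [RHS]eS.
by congr spec_mx; apply/rowP=> i; rewrite !mxE -expr2 sqrCK // psd_eig.
Qed.

Lemma sqrtmxZ n (c : C) (A : 'M[C]_n) : 0 <= c -> psdmx A ->
  sqrtmx (c *: A) = sqrtC c *: sqrtmx A.
Proof.
move=> c0 pA; have pS : psdmx (sqrtC c *: sqrtmx A).
  by apply: psdZ; [rewrite sqrtC_ge0 | exact: sqrtmx_psd].
rewrite -(sqrtmx_unique pS) -scalemxAr -scalemxAl sqrtmx_sq //.
by rewrite scalerA -expr2 sqrtCK.
Qed.

(* [Tr (G H) = Tr (sqrt H G sqrt H) >= 0] for PSD [G] and [H]. *)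
Lemma tr_psd_mul n (G H : 'M[C]_n) : psdmx G -> psdmx H -> 0 <= \tr (G *m H).
Proof.
move=> pG pH; rewrite -(sqrtmx_sq pH) mulmxA mxtrace_mulC mulmxA.
by rewrite -{2}(sqrtmx_hermitian pH); apply: tr_conj_psd.
Qed.

End PositiveSemidefinite.

Section TraceNorm.
Variable C : numClosedFieldType.

Lemma trnorm_ge0 n (Z : 'M[C]_n) : 0 <= trnorm Z.
Proof. exact/psd_tr_ge0/sqrtmx_psd/psd_adj_mul. Qed.

(* [|Tr Z| <= ||Z||_1]: in an eigenbasis (rows u_j of V) of [Z^* Z] with
   eigenvalues mu_j, the j-th diagonal entry of [V Z V^*] is an inner product
   <u_j, w_j> with |u_j| = 1 and |w_j|^2 = mu_j, so Cauchy-Schwarz bounds it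
   by sqrt mu_j, and sum_j sqrt mu_j = Tr sqrt(Z^* Z). *)
Lemma norm_tr_le_trnorm n (Z : 'M[C]_n) : `|\tr Z| <= trnorm Z.
Proof.
rewrite /trnorm; set G := adjmx Z *m Z.
have pG : psdmx G by exact: psd_adj_mul.
set V := spectralmx G; set mu := spectral_diag G.
have [VV VV'] : unitary V by exact: spectral_unitary.
rewrite sqrtmx_spec // mxtrace_spec; last exact: spectral_unitary.
have -> : \tr Z = \tr (V *m Z *m adjmx V).
  by rewrite mxtrace_mulC mulmxA VV' mul1mx.
rewrite /mxtrace; apply: le_trans (ler_norm_sum _ _ _) _.
apply: ler_sum => j _; rewrite [X in _ <= X]mxE.
pose u : 'rV[C]_n := row j V.
pose w : 'rV[C]_n := \row_k ((Z *m adjmx V) k j)^*.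
have diag_dot : (V *m Z *m adjmx V) j j = dotmx u w.
  by rewrite dotmxE -mulmxA !mxE; apply: eq_bigr=> k _; rewrite !mxE conjCK.
have u_unit : dotmx u u = 1.
  have <- : (V *m adjmx V) j j = 1 by rewrite VV mxE eqxx.
  by rewrite dotmxE !mxE; apply: eq_bigr=> k _; rewrite !mxE.
have w_norm : dotmx w w = mu 0 j.
  have -> : mu 0 j = (V *m G *m adjmx V) j j.
    rewrite [X in V *m X *m _](hermitian_spectral (psd_hermitian pG)) -/V -/mu.
    by rewrite !mulmxA VV mul1mx -mulmxA VV mulmx1 mxE eqxx mulr1n.
  have -> : V *m G *m adjmx V = adjmx (Z *m adjmx V) *m (Z *m adjmx V).
    by rewrite adjmxM adjmxK !mulmxA.
  by rewrite dotmxE !mxE; apply: eq_bigr=> k _; rewrite !mxE conjCK mulrC.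
have cs : `|dotmx u w| ^+ 2 <= dotmx u u * dotmx w w :=
  (@CauchySchwarz C _ (@dotmx C n) u w).1.
rewrite u_unit w_norm mul1r -diag_dot in cs.
rewrite -(ler_sqrtC (x := `|_| ^+ 2)) ?nnegrE ?exprn_ge0 ?psd_eig // in cs.
by rewrite sqrCK in cs.
Qed.

End TraceNorm.

Section GaoBound.
Variable C : numClosedFieldType.
Variable n : nat.
Variable rho : 'M[C]_n.
Hypothesis rho_psd : psdmx rho.

Definition gram (X Y : 'M[C]_n) : C := \tr (X *m rho *m adjmx Y).

Lemma gramDl X X' Y : gram (X + X') Y = gram X Y + gram X' Y.
Proof. by rewrite /gram !mulmxDl mxtraceD. Qed.
Lemma gramDr X Y Y' : gram X (Y + Y') = gram X Y + gram X Y'.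
Proof. by rewrite /gram adjmxD mulmxDr mxtraceD. Qed.
Lemma gramNl X Y : gram (- X) Y = - gram X Y.
Proof. by rewrite /gram !mulNmx (raddfN (@mxtrace _ _)). Qed.
Lemma gramNr X Y : gram X (- Y) = - gram X Y.
Proof. by rewrite /gram adjmxN mulmxN (raddfN (@mxtrace _ _)). Qed.
Lemma gramZl (c : C) X Y : gram (c *: X) Y = c * gram X Y.
Proof. by rewrite /gram -!scalemxAl mxtraceZ. Qed.
Lemma gramZr (c : C) X Y : gram X (c *: Y) = c^* * gram X Y.
Proof. by rewrite /gram adjmxZ -scalemxAr mxtraceZ. Qed.

Lemma gram_hermitian Q X Y : hermitian Q -> gram (Q *m X) Y = gram X (Q *m Y).
Proof. by move=> hQ; rewrite /gram adjmxM hQ !mulmxA [RHS]mxtrace_mulC !mulmxA. Qed.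

Lemma gram_ge0 X : 0 <= gram X X.
Proof. exact: tr_conj_psd. Qed.

(* Gao's potential: it vanishes at [M = 1], it is an upper bound for
   [Tr rho - <M, M>], and a projection [Pi] increases it by at most
   [4 <1 - Pi, 1 - Pi>]. *)
Definition gao_potential (M : 'M[C]_n) : C :=
  \tr rho - gram M M + 2 * gram (1%:M - M) (1%:M - M).

Lemma gao_potential_step (M Pi : 'M[C]_n) : hermitian Pi -> Pi *m Pi = Pi ->
  let Q := 1%:M - Pi in
  gao_potential (Pi *m M) =
    gao_potential M + 4 * gram Q Q - gram (Q *m M - 2%:R *: Q) (Q *m M - 2%:R *: Q).
Proof.
move=> hP PP Q.
have hQ : hermitian Q by rewrite /hermitian /Q adjmxB adjmx1 hP.
have QQ : Q *m Q = Q by rewrite /Q mulmxBl mul1mx mulmxBr mulmx1 PP subrr subr0.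
have ePM : Pi *m M = M - Q *m M by rewrite /Q mulmxBl mul1mx opprB addrC subrK.
rewrite /gao_potential ePM; clearbody Q; set q := Q *m M.
have -> : 1%:M - (M - q) = (1%:M - M) + q by rewrite opprB addrA addrAC.
rewrite !(gramDl, gramDr, gramNl, gramNr, gramZl, gramZr) rmorph_nat.
have -> : gram q q = gram M q by rewrite /q gram_hermitian // mulmxA QQ.
have -> : gram q M = gram M q by rewrite /q gram_hermitian.
have -> : gram 1%:M q = gram Q M by rewrite /q -gram_hermitian // mulmx1.
have -> : gram Q q = gram Q M by rewrite /q -gram_hermitian // QQ.
have -> : gram q 1%:M = gram M Q by rewrite /q gram_hermitian // mulmx1.
have -> : gram q Q = gram M Q by rewrite /q gram_hermitian // QQ.
ring.
Qed.

Lemma gao_bound (I : Type) (s : seq I) (Pi : I -> 'M[C]_n) :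
  (forall i, hermitian (Pi i) /\ Pi i *m Pi i = Pi i) ->
  \tr rho - gram (foldl (fun M i => Pi i *m M) 1%:M s)
                 (foldl (fun M i => Pi i *m M) 1%:M s) <=
    4 * \sum_(i <- s) \tr ((1%:M - Pi i) *m rho).
Proof.
move=> hPi.
have step M0 : gao_potential (foldl (fun M i => Pi i *m M) M0 s) <=
    gao_potential M0 + 4 * \sum_(i <- s) \tr ((1%:M - Pi i) *m rho).
  elim: s M0 => [|i s IH] M0 /=; first by rewrite big_nil mulr0 addr0.
  apply: le_trans (IH _) _; have [hP PP] := hPi i.
  rewrite gao_potential_step // big_cons mulrDr addrA lerD2r.
  have -> : gram (1%:M - Pi i) (1%:M - Pi i) = \tr ((1%:M - Pi i) *m rho).
    rewrite /gram adjmxB adjmx1 hP mxtrace_mulC mulmxA.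
    by rewrite mulmxBl mul1mx mulmxBr mulmx1 PP subrr subr0.
  by rewrite lerBlDr lerDl gram_ge0.
have pot1 : gao_potential 1%:M = 0.
  rewrite /gao_potential /gram subrr !mul1mx adjmx1 mulmx1 subrr.
  by rewrite !mul0mx mxtrace0 mulr0 addr0.
have := step 1%:M; rewrite pot1 add0r; apply: le_trans.
by rewrite /gao_potential lerDl mulr_ge0 ?gram_ge0.
Qed.

End GaoBound.

Section HolevoHelstrom.
Variable C : numClosedFieldType.
Variable n : nat.

(* Properties of [P = {D >= 0}] for a Hermitian [D], read off the common
   eigenbasis of [D] and [P]. *)
Section NonnegProjector.
Variable D : 'M[C]_n.
Hypothesis hD : hermitian D.
Let U := spectralmx D.
Let dl := spectral_diag D.
Let uU : unitary U := spectral_unitary D.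
Let step (x : C) : C := if 0 <= x then 1 else 0.

Let nnpE : nonneg_proj D = spec_mx U (map_mx step dl).
Proof. exact: fun_mx_hermitian. Qed.

Let DE : D = spec_mx U dl.
Proof. exact: hermitian_spectral. Qed.

Lemma nonneg_proj_hermitian : hermitian (nonneg_proj D).
Proof.
rewrite /hermitian nnpE adjmx_spec; congr spec_mx; apply/rowP=> i.
by rewrite !mxE /step; case: ifP; rewrite ?rmorph1 ?rmorph0.
Qed.

Lemma nonneg_proj_idem : nonneg_proj D *m nonneg_proj D = nonneg_proj D.
Proof.
rewrite nnpE spec_mxM //; congr spec_mx; apply/rowP=> i.
by rewrite !mxE /step; case: ifP; rewrite ?mulr1 ?mulr0.
Qed.

Lemma nonneg_proj_comm : nonneg_proj D *m D = D *m nonneg_proj D.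
Proof.
rewrite nnpE [in RHS]DE [X in _ *m X]DE !spec_mxM //; congr spec_mx.
by apply/rowP=> i; rewrite !mxE mulrC.
Qed.

Lemma nonneg_proj_pos : psdmx (nonneg_proj D *m D).
Proof.
rewrite nnpE [X in _ *m X]DE spec_mxM //; apply: psd_spec => i.
by rewrite !mxE /step; case: ifP => h; rewrite ?mul1r ?mul0r.
Qed.

Lemma nonneg_proj_neg : psdmx (- ((1%:M - nonneg_proj D) *m D)).
Proof.
rewrite nnpE -(spec_mx_const 1 uU) -spec_mxB [X in _ *m X]DE spec_mxM //.
rewrite -spec_mxN; apply: psd_spec => i; rewrite !mxE /step.
have := hermitian_eig_real i hD.
case: ifP => h rl; rewrite ?subrr ?mul0r ?subr0 ?sub0r ?mul1r ?oppr_ge0 //.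
by rewrite real_leNgt ?rpred0 //; apply/negP => /ltW; rewrite h.
Qed.

End NonnegProjector.

(* With [R0 = X^2], [R1 = Y^2], [D = X - Y], [P = {D >= 0}], the errors of [P]
   plus two nonnegative traces add up to [Tr (X Y)]. *)
Lemma helstrom_identity (P D Y : 'M[C]_n) : P *m D = D *m P ->
  \tr ((1%:M - P) *m ((D + Y) *m (D + Y))) + \tr (P *m (Y *m Y))
  + \tr (P *m D *m Y) + \tr (- ((1%:M - P) *m D) *m (D + Y)) =
  \tr ((D + Y) *m Y).
Proof.
move=> cm.
have t1 : \tr (Y *m D) = \tr (D *m Y) by rewrite mxtrace_mulC.
have t2 : \tr (P *m Y *m D) = \tr (P *m D *m Y) by rewrite mxtrace_mulC mulmxA -cm.
rewrite !(mulmxDl, mulmxDr, mulmxBl, mulmxBr, mulNmx, mulmxN, mul1mx) !mulmxA.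
rewrite !(mxtraceD, raddfN, raddfB (@mxtrace _ _)) /= t1 t2.
ring.
Qed.

Lemma holevo_helstrom (R0 R1 : 'M[C]_n) : psdmx R0 -> psdmx R1 ->
  \tr ((1%:M - nonneg_proj (sqrtmx R0 - sqrtmx R1)) *m R0) +
  \tr (nonneg_proj (sqrtmx R0 - sqrtmx R1) *m R1) <= trnorm (sqrtmx R0 *m sqrtmx R1).
Proof.
move=> p0 p1; set X := sqrtmx R0; set Y := sqrtmx R1; set P := nonneg_proj _.
have pX : psdmx X by exact: sqrtmx_psd.
have pY : psdmx Y by exact: sqrtmx_psd.
have hD : hermitian (X - Y).
  by rewrite /hermitian adjmxB (psd_hermitian pX) (psd_hermitian pY).
have pos : 0 <= \tr (P *m (X - Y) *m Y) by apply: tr_psd_mul => //; exact: nonneg_proj_pos.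
have neg : 0 <= \tr (- ((1%:M - P) *m (X - Y)) *m X).
  by apply: tr_psd_mul => //; exact: nonneg_proj_neg.
have iden : \tr ((1%:M - P) *m R0) + \tr (P *m R1) + \tr (P *m (X - Y) *m Y)
    + \tr (- ((1%:M - P) *m (X - Y)) *m X) = \tr (X *m Y).
  rewrite -(sqrtmx_sq p0) -(sqrtmx_sq p1) -/X -/Y.
  by have := helstrom_identity Y (nonneg_proj_comm hD); rewrite subrK.
apply: le_trans (norm_tr_le_trnorm _).
rewrite ger0_norm ?tr_psd_mul // -iden -addrA lerDl.
by rewrite addr_ge0.
Qed.

End HolevoHelstrom.

Section BlockDiagonal.
Variable C : numClosedFieldType.

Definition pair_of_idx m n (k : 'I_(m * n)) : 'I_m * 'I_n :=
  enum_val (cast_ord (esym (@mxvec_cast m n)) k).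
Definition idx_of_pair m n (p : 'I_m * 'I_n) : 'I_(m * n) :=
  cast_ord (@mxvec_cast m n) (enum_rank p).

Lemma pair_of_idxK m n : cancel (@pair_of_idx m n) (@idx_of_pair m n).
Proof. by move=> k; rewrite /pair_of_idx /idx_of_pair enum_valK cast_ordKV. Qed.
Lemma idx_of_pairK m n : cancel (@idx_of_pair m n) (@pair_of_idx m n).
Proof. by move=> p; rewrite /pair_of_idx /idx_of_pair cast_ordK enum_rankK. Qed.

Lemma sum_pair_of_idx m n (F : 'I_m -> 'I_n -> C) :
  \sum_(k < m * n) F (pair_of_idx k).1 (pair_of_idx k).2 = \sum_i \sum_j F i j.
Proof.
rewrite pair_big /= (reindex (@idx_of_pair m n)) /=; last first.
  by exists (@pair_of_idx m n) => x _; rewrite ?pair_of_idxK ?idx_of_pairK.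
by apply: eq_bigr => [[i j]] _; rewrite idx_of_pairK.
Qed.

Lemma tensmxE m1 n1 m2 n2 (A : 'M[C]_(m1, n1)) (B : 'M[C]_(m2, n2)) k l :
  tensmx A B k l =
  A (pair_of_idx k).1 (pair_of_idx l).1 * B (pair_of_idx k).2 (pair_of_idx l).2.
Proof. by rewrite mxE. Qed.

Lemma tensmx_mul m1 n1 p1 m2 n2 p2 (A : 'M[C]_(m1, n1)) (B : 'M[C]_(m2, n2))
  (A' : 'M[C]_(n1, p1)) (B' : 'M[C]_(n2, p2)) :
  tensmx A B *m tensmx A' B' = tensmx (A *m A') (B *m B').
Proof.
apply/matrixP=> k l; rewrite [LHS]mxE tensmxE !mxE.
set a := pair_of_idx k; set b := pair_of_idx l.
pose F i j := A a.1 i * A' i b.1 * (B a.2 j * B' j b.2).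
rewrite (eq_bigr (fun r => F (pair_of_idx r).1 (pair_of_idx r).2)); last first.
  by move=> r _; rewrite !tensmxE /F; ring.
rewrite sum_pair_of_idx mulr_suml; apply: eq_bigr => i _.
by rewrite mulr_sumr.
Qed.

Lemma adjmx_tens m1 n1 m2 n2 (A : 'M[C]_(m1, n1)) (B : 'M[C]_(m2, n2)) :
  adjmx (tensmx A B) = tensmx (adjmx A) (adjmx B).
Proof. by apply/matrixP=> k l; rewrite !(mxE, tensmxE) rmorphM. Qed.

Lemma mxtrace_tens m n (A : 'M[C]_m) (B : 'M[C]_n) :
  \tr (tensmx A B) = \tr A * \tr B.
Proof.
rewrite /mxtrace; under eq_bigr => k _ do rewrite tensmxE.
rewrite (sum_pair_of_idx (fun i j => A i i * B j j)) mulr_suml.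
by apply: eq_bigr => i _; rewrite mulr_sumr.
Qed.

Lemma tensmxZr m1 n1 m2 n2 (c : C) (A : 'M[C]_(m1, n1)) (B : 'M[C]_(m2, n2)) :
  tensmx A (c *: B) = c *: tensmx A B.
Proof. by apply/matrixP=> k l; rewrite tensmxE [RHS]mxE tensmxE mxE mulrCA. Qed.

Lemma tensmx0l m1 n1 m2 n2 (B : 'M[C]_(m2, n2)) :
  tensmx (0 : 'M[C]_(m1, n1)) B = 0.
Proof. by apply/matrixP=> k l; rewrite tensmxE !mxE mul0r. Qed.

(* The tensor product of positive matrices is positive: it is
   [T^* T] with [T = sqrt A (x) sqrt B]. *)
Lemma psd_tens m n (A : 'M[C]_m) (B : 'M[C]_n) :
  psdmx A -> psdmx B -> psdmx (tensmx A B).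
Proof.
move=> pA pB.
have -> : tensmx A B = adjmx (tensmx (sqrtmx A) (sqrtmx B)) *m
                       tensmx (sqrtmx A) (sqrtmx B).
  by rewrite adjmx_tens tensmx_mul !sqrtmx_hermitian // !sqrtmx_sq.
exact: psd_adj_mul.
Qed.

(* The block-diagonal matrix [sum_k |k><k| (x) M_k], the shape of the split
   channel outputs (a classical register tensored with a quantum state). *)
Definition blockdiag p m (M : 'I_p -> 'M[C]_m) : 'M[C]_(p * m) :=
  \sum_(k < p) tensmx (delta_mx k k) (M k).

Lemma eq_blockdiag p m (M N : 'I_p -> 'M[C]_m) :
  (forall k, M k = N k) -> blockdiag M = blockdiag N.
Proof. by move=> h; apply: eq_bigr => k _; rewrite h. Qed.

Lemma blockdiag_mul p m (M N : 'I_p -> 'M[C]_m) :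
  blockdiag M *m blockdiag N = blockdiag (fun k => M k *m N k).
Proof.
rewrite /blockdiag mulmx_suml; apply: eq_bigr => k _.
rewrite mulmx_sumr (bigD1 k) //= big1 ?addr0; first by rewrite tensmx_mul mul_delta_mx.
move=> l nlk; rewrite tensmx_mul mul_delta_mx_cond.
by rewrite eq_sym (negbTE nlk) mulr0n tensmx0l.
Qed.

Lemma adjmx_delta p (i j : 'I_p) : adjmx (delta_mx i j : 'M[C]_p) = delta_mx j i.
Proof. by rewrite /adjmx map_delta_mx ?rmorph1 // trmx_delta. Qed.

Lemma adjmx_blockdiag p m (M : 'I_p -> 'M[C]_m) :
  adjmx (blockdiag M) = blockdiag (fun k => adjmx (M k)).
Proof.
by rewrite /blockdiag adjmx_sum; apply: eq_bigr => k _; rewrite adjmx_tens adjmx_delta.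
Qed.

Lemma mxtrace_blockdiag p m (M : 'I_p -> 'M[C]_m) :
  \tr (blockdiag M) = \sum_k \tr (M k).
Proof.
rewrite /blockdiag (big_morph _ (@mxtraceD _ _) (@mxtrace0 _ _)).
apply: eq_bigr => k _; rewrite mxtrace_tens.
have -> : \tr (delta_mx k k : 'M[C]_p) = 1.
  rewrite /mxtrace (bigD1 k) //= big1 ?addr0 ?mxE ?eqxx // => j njk.
  by rewrite mxE (negbTE njk).
by rewrite mul1r.
Qed.

Lemma psd_blockdiag p m (M : 'I_p -> 'M[C]_m) :
  (forall k, psdmx (M k)) -> psdmx (blockdiag M).
Proof.
move=> h; apply: psd_sum => k _; apply: psd_tens => //.
have -> : (delta_mx k k : 'M[C]_p) = adjmx (delta_mx k k) *m delta_mx k k.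
  by rewrite adjmx_delta mul_delta_mx.
exact: psd_adj_mul.
Qed.

Lemma sqrtmx_blockdiag p m (M : 'I_p -> 'M[C]_m) : (forall k, psdmx (M k)) ->
  sqrtmx (blockdiag M) = blockdiag (fun k => sqrtmx (M k)).
Proof.
move=> h; have pS : psdmx (blockdiag (fun k => sqrtmx (M k))).
  by apply: psd_blockdiag => k; exact: sqrtmx_psd.
rewrite -{1}(sqrtmx_unique pS) blockdiag_mul; congr sqrtmx.
by apply: eq_blockdiag => k; rewrite sqrtmx_sq.
Qed.

Lemma trnorm_blockdiag p m (Z : 'I_p -> 'M[C]_m) :
  trnorm (blockdiag Z) = \sum_k trnorm (Z k).
Proof.
rewrite /trnorm adjmx_blockdiag blockdiag_mul sqrtmx_blockdiag ?mxtrace_blockdiag //.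
by move=> k; exact: psd_adj_mul.
Qed.

Lemma trnormZ n (c : C) (Z : 'M[C]_n) : 0 <= c -> trnorm (c *: Z) = c * trnorm Z.
Proof.
move=> c0; have cc : c^* = c by rewrite conj_Creal // ger0_real.
rewrite /trnorm adjmxZ -scalemxAr -scalemxAl scalerA cc.
rewrite sqrtmxZ ?mulr_ge0 //; last exact: psd_adj_mul.
by rewrite mxtraceZ -expr2 sqrCK.
Qed.

End BlockDiagonal.

Section Counting.
Local Open Scope nat_scope.

Lemma card_agree N (P : pred 'I_N) (v : 'I_N -> bool) :
  #|[pred u : {ffun 'I_N -> bool} | [forall k, P k ==> (u k == v k)]]| =
  2 ^ #|[pred k | ~~ P k]|.
Proof.
pose F k : pred bool := if P k then pred1 (v k) else predT.
rewrite (@eq_card _ _ (family F)); last first.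
  move=> u; rewrite !inE.
  by apply/forallP/familyP => h k; move: (h k); rewrite /F; case: (P k).
rewrite card_family foldrE big_map big_enum -prod_nat_const [RHS]big_mkcond /=.
by apply: eq_bigr => k _; rewrite /F inE; case: (P k); rewrite ?card1 ?card_bool.
Qed.

Lemma card_ge N (len : nat) : len <= N ->
  #|[pred k : 'I_N | ~~ (k < len)]| = N - len.
Proof.
move=> leN; rewrite -sum1_card big_mkcond /=.
rewrite (eq_bigr (fun k : 'I_N => ((len <= k) : nat))); last first.
  by move=> k _; rewrite inE -leqNgt; case: (len <= k).
rewrite -(big_mkord xpredT (fun k => ((len <= k) : nat))).
rewrite (big_cat_nat (leq0n len) leN) /= big_nat_cond big1 ?add0n; last first.
  by move=> k /andP[/andP[_ kl] _]; rewrite leqNgt kl.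
rewrite big_nat_cond (eq_bigr (fun _ => 1)); last first.
  by move=> k /andP[/andP[lk _] _]; rewrite lk.
by rewrite -big_nat_cond sum_nat_const_nat muln1.
Qed.

End Counting.

Section Bits.
Local Open Scope nat_scope.

(* [bit_of k] is the binary expansion of [k], least significant bit first;
   every prefix of length [i] is the expansion of exactly one [k < 2 ^ i]. *)
Lemma bit_of0 k : bit_of k 0 = odd k.
Proof. by rewrite /bit_of expn0 divn1. Qed.

Lemma bit_ofS k j : bit_of k j.+1 = bit_of k./2 j.
Proof. by rewrite /bit_of expnS divnMA divn2. Qed.

Lemma bits_exist i (pre : nat -> bool) :
  exists2 k, k < 2 ^ i & forall j, j < i -> bit_of k j = pre j.
Proof.
elim: i pre => [|i IH] pre; first by exists 0.
have [k' lk' hk'] := IH (fun j => pre j.+1).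
exists (pre 0 + k'.*2).
  rewrite expnS mul2n; case: (pre 0) => /=; last by rewrite add0n ltn_double.
  by rewrite add1n ltn_Sdouble.
case=> [|j] lj; first by rewrite bit_of0 oddD odd_double addbF oddb.
by rewrite bit_ofS half_bit_double hk'.
Qed.

Lemma bits_unique i k k' : k < 2 ^ i -> k' < 2 ^ i ->
  (forall j, j < i -> bit_of k j = bit_of k' j) -> k = k'.
Proof.
elim: i k k' => [|i IH] k k'; first by rewrite expn0 !ltnS !leqn0 => /eqP-> /eqP->.
move=> lk lk' h; have odd_eq : odd k = odd k' by rewrite -!bit_of0 h.
have half_eq : k./2 = k'./2.
  apply: IH; try by rewrite ltn_half_double -mul2n -expnS.
  by move=> j lj; rewrite -!bit_ofS h.
by rewrite -(odd_double_half k) -(odd_double_half k') odd_eq half_eq.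
Qed.

Lemma bits_ofE N (u : {ffun 'I_N -> bool}) (k : 'I_N) : bits_of u k = u k.
Proof. by rewrite /bits_of valK. Qed.

Lemma bits_of_lt N (u : {ffun 'I_N -> bool}) j (h : j < N) :
  bits_of u j = u (Ordinal h).
Proof. by rewrite /bits_of insubT. Qed.

End Bits.

Section ChannelCombining.
Variable C : numClosedFieldType.
Variable d : nat.
Variable W : bool -> 'M[C]_d.
Hypothesis HW : forall x, densitymx (W x).

Lemma rhoN_density n u : psdmx (rhoN W n u) /\ \tr (rhoN W n u) = 1.
Proof.
elim: n u => [|n IH] u /=; first exact: HW.
have [p1 t1] := IH (fun k => u k.*2 (+) u k.*2.+1).
have [p2 t2] := IH (fun k => u k.*2.+1).
by split; [exact: psd_tens | rewrite mxtrace_tens t1 t2 mulr1].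
Qed.

Lemma rho_psd n (u : {ffun 'I_(2 ^ n) -> bool}) : psdmx (rho W u).
Proof. exact: (rhoN_density n (bits_of u)).1. Qed.

Lemma rho_tr n (u : {ffun 'I_(2 ^ n) -> bool}) : \tr (rho W u) = 1.
Proof. exact: (rhoN_density n (bits_of u)).2. Qed.

Lemma rhobar_psd n len pre : psdmx (rhobar W n len pre).
Proof.
by apply: psdZ; [rewrite invr_ge0 ler0n | apply: psd_sum => v _; exact: rho_psd].
Qed.

Lemma rhobar_ext n len pre pre' : (forall j, (j < len)%N -> pre j = pre' j) ->
  rhobar W n len pre = rhobar W n len pre'.
Proof.
move=> h; rewrite /rhobar; congr (_ *: _); apply: eq_bigl => v.
by apply: eq_forallb => k; case: ltnP => // lk; rewrite h.
Qed.

End ChannelCombining.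

Section Averaging.
Variable C : numClosedFieldType.
Variable d : nat.
Variable W : bool -> 'M[C]_d.
Variable n : nat.
Local Notation N := (2 ^ n)%N.
Local Notation T := {ffun 'I_N -> bool}.

Definition agree len (u v : T) := [forall k : 'I_N, (k < len)%N ==> (u k == v k)].

Lemma agree_sym len u v : agree len u v = agree len v u.
Proof. by apply: eq_forallb => k; rewrite eq_sym. Qed.

Lemma card_agree_prefix len (v : T) : (len <= N)%N ->
  #|[pred u : T | agree len u v]| = (2 ^ (N - len))%N.
Proof.
move=> lN; rewrite -(card_ge lN) -(card_agree (fun k : 'I_N => (k < len)%N) v).
by apply: eq_card => u; rewrite !inE.
Qed.

Lemma rhobar_agree len (u : T) :
  rhobar W n len (bits_of u) =
  ((2 ^ (N - len))%:R)^-1 *: \sum_(v | agree len v u) rho W v.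
Proof.
rewrite /rhobar; congr (_ *: _); apply: eq_bigl => v.
by apply: eq_forallb => k; rewrite bits_ofE.
Qed.

Lemma sum_tr_rhobar len (g : T -> 'M[C]_(dimN d n)) : (len <= N)%N ->
  (forall u v, agree len u v -> g u = g v) ->
  \sum_u \tr (g u *m rho W u) = \sum_u \tr (g u *m rhobar W n len (bits_of u)).
Proof.
move=> lN hg; have ne : ((2 ^ (N - len))%:R : C) != 0 by rewrite pnatr_eq0 expn_eq0.
transitivity (\sum_u ((2 ^ (N - len))%:R)^-1 *
     \sum_(v | agree len v u) \tr (g v *m rho W v)); last first.
  apply: eq_bigr => u _; rewrite rhobar_agree -scalemxAr mxtraceZ.
  congr (_ * _); rewrite mulmx_sumr raddf_sum; apply: eq_bigr => v avu.
  by rewrite (hg u v) // agree_sym.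
rewrite -mulr_sumr [X in _ = _ * X](exchange_big_dep xpredT) //=.
under [X in _ = _ * X]eq_bigr => v _.
  rewrite sumr_const (eq_card (B := [pred u | agree len u v])); last first.
    by move=> u; rewrite !inE agree_sym.
  rewrite card_agree_prefix // -mulr_natl; over.
by rewrite -mulr_sumr mulrA mulVf // mul1r.
Qed.

Lemma sum_by_prefix i (F : (nat -> bool) -> C) : (i <= N)%N ->
  (forall p p', (forall j, (j < i)%N -> p j = p' j) -> F p = F p') ->
  \sum_(u : T) F (bits_of u) = (2 ^ (N - i))%:R * \sum_(k < 2 ^ i) F (bit_of k).
Proof.
move=> iN hF.
pose has_prefix (k : 'I_(2 ^ i)) (u : T) :=
  [forall j : 'I_N, (j < i)%N ==> (u j == bit_of k j)].
have prefixE k u j : has_prefix k u -> (j < i)%N -> bits_of u j = bit_of k j.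
  move=> /forallP hu lj; have jN : (j < N)%N by exact: leq_trans lj iN.
  by rewrite (bits_of_lt u jN); move: (hu (Ordinal jN)); rewrite /= lj => /eqP.
transitivity (\sum_k \sum_(u | has_prefix k u) F (bits_of u)); last first.
  rewrite mulr_sumr; apply: eq_bigr => k _.
  rewrite (eq_bigr (fun _ => F (bit_of k))) => [|u hu]; last first.
    by apply: hF => j; exact: prefixE.
  rewrite sumr_const mulr_natl -(card_ge iN); congr (_ *+ _).
  rewrite -(card_agree (fun j : 'I_N => (j < i)%N) (bit_of k)).
  by apply: eq_card => u; rewrite !inE.
rewrite (exchange_big_dep xpredT) //=; apply: eq_bigr => u _.
have [k0 lk0 hk0] := bits_exist i (bits_of u).
have unique_prefix : #|[pred k : 'I_(2 ^ i) | has_prefix k u]| = 1%N.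
  apply: eq_trans (card1 (Ordinal lk0)); apply: eq_card => k; rewrite !inE.
  apply/idP/eqP => [hk|->]; first apply/val_inj/bits_unique => //= j lj.
    by rewrite hk0 // (prefixE _ _ _ hk).
  by apply/forallP => j; apply/implyP => lj; rewrite /= hk0 // bits_ofE.
by rewrite sumr_const unique_prefix.
Qed.

End Averaging.

Section PositionBound.
Variable C : numClosedFieldType.
Variable d : nat.
Variable W : bool -> 'M[C]_d.
Hypothesis HW : forall x, densitymx (W x).
Variable n : nat.
Local Notation N := (2 ^ n)%N.
Local Notation T := {ffun 'I_N -> bool}.
Variable A : {set 'I_N}.
Variable i : 'I_N.
Hypothesis iA : i \in A.

(* The two hypotheses [rhobar_(u_1^(i-1) b)] of the i-th decoder step, the
   projector [{sqrt R0 - sqrt R1 >= 0}] deciding between them, and the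
   projector onto the wrong decision when the transmitted bit is [u i]. *)
Definition rhobar_at (u : T) (b : bool) : 'M[C]_(dimN d n) :=
  rhobar W n i.+1 (fun j => if j == nat_of_ord i then b else bits_of u j).
Definition helstrom_proj (u : T) : 'M[C]_(dimN d n) :=
  nonneg_proj (sqrtmx (rhobar_at u false) - sqrtmx (rhobar_at u true)).
Definition err_proj (u : T) : 'M[C]_(dimN d n) := 1%:M - dec_proj W A u i.

Lemma dec_projE u :
  dec_proj W A u i = if u i then 1%:M - helstrom_proj u else helstrom_proj u.
Proof. by rewrite /dec_proj iA. Qed.

Lemma agree_bits (u v : T) j : agree i.+1 u v -> (j < i.+1)%N ->
  bits_of u j = bits_of v j.
Proof.
move=> /forallP h lj; have jN : (j < N)%N by exact: leq_trans lj (ltn_ord i).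
by rewrite !(bits_of_lt _ jN); move: (h (Ordinal jN)); rewrite /= lj => /eqP.
Qed.

Lemma rhobar_at_agree (u v : T) b : agree i.+1 u v -> rhobar_at u b = rhobar_at v b.
Proof.
move=> h; apply: rhobar_ext => j lj.
by case: eqP => // _; exact: agree_bits.
Qed.

Lemma err_proj_agree (u v : T) : agree i.+1 u v -> err_proj u = err_proj v.
Proof.
move=> h; rewrite /err_proj !dec_projE /helstrom_proj !(rhobar_at_agree _ h).
by have -> : u i = v i by move: h => /forallP /(_ i); rewrite ltnSn => /eqP.
Qed.

Lemma rhobar_at_self u : rhobar_at u (u i) = rhobar W n i.+1 (bits_of u).
Proof. by apply: rhobar_ext => j lj; case: eqP => // ->; rewrite bits_ofE. Qed.

Definition step_err (u : T) : C := \tr (err_proj u *m rhobar_at u (u i)).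

(* Averaging the i-th error term, [rho_u] may be replaced by
   [rhobar_(u_1^i)] since the i-th projector only depends on [u_1^i]. *)
Lemma sum_err_step_err :
  \sum_u \tr (err_proj u *m rho W u) = \sum_u step_err u.
Proof.
rewrite (@sum_tr_rhobar _ _ W n i.+1 err_proj) //; last exact: err_proj_agree.
by apply: eq_bigr => u _; rewrite /step_err rhobar_at_self.
Qed.

(* Flipping the i-th bit exchanges the two hypotheses of the i-th step. *)
Definition flip_at (u : T) : T := [ffun k => if k == i then ~~ u k else u k].

Lemma flip_atK : involutive flip_at.
Proof.
by move=> u; apply/ffunP => k; rewrite !ffunE; case: eqP => // ->; rewrite negbK.
Qed.

Lemma rhobar_at_flip u b : rhobar_at (flip_at u) b = rhobar_at u b.
Proof.
apply: rhobar_ext => j _; case: eqP => // nji.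
rewrite /bits_of; case: insubP => //= k _ vk; rewrite ffunE.
by case: eqP => // ki; case: nji; rewrite -vk ki.
Qed.

Definition helstrom_err (u : T) : C :=
  \tr ((1%:M - helstrom_proj u) *m rhobar_at u false) +
  \tr (helstrom_proj u *m rhobar_at u true).

Lemma step_err_flip u : step_err u + step_err (flip_at u) = helstrom_err u.
Proof.
rewrite /step_err /helstrom_err /err_proj !dec_projE ffunE eqxx !rhobar_at_flip.
have -> : helstrom_proj (flip_at u) = helstrom_proj u.
  by rewrite /helstrom_proj !rhobar_at_flip.
have e : 1%:M - (1%:M - helstrom_proj u) = helstrom_proj u by rewrite opprB addrC subrK.
by case: (u i); rewrite /= e // addrC.
Qed.

(* Pairing each [u] with [flip_at u]. *)
Lemma sum_step_err : \sum_u step_err u = 2^-1 * \sum_u helstrom_err u.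
Proof.
have flip_sum : \sum_u step_err (flip_at u) = \sum_u step_err u.
  by rewrite [RHS](reindex_inj (can_inj flip_atK)).
rewrite -(eq_bigr _ (fun u _ => step_err_flip u)) big_split /= flip_sum.
by rewrite -mulr2n -(mulr_natl (\sum_u step_err u)) mulrA mulVf ?mul1r ?pnatr_eq0.
Qed.

Definition rhobar_reg (k : nat) (b : bool) : 'M[C]_(dimN d n) :=
  rhobar W n i.+1 (fun j => if j == nat_of_ord i then b else bit_of k j).
Definition overlap_reg (k : nat) : 'M[C]_(dimN d n) :=
  sqrtmx (rhobar_reg k false) *m sqrtmx (rhobar_reg k true).

Lemma sum_trnorm_prefix :
  \sum_u trnorm (sqrtmx (rhobar_at u false) *m sqrtmx (rhobar_at u true)) =
  (2 ^ (N - i))%:R * \sum_(k < 2 ^ i) trnorm (overlap_reg k).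
Proof.
pose rhob (p : nat -> bool) b :=
  rhobar W n i.+1 (fun j => if j == nat_of_ord i then b else p j).
pose F p := trnorm (sqrtmx (rhob p false) *m sqrtmx (rhob p true)).
apply: (@sum_by_prefix _ n i F (ltnW (ltn_ord i))) => p p' h.
have e b : rhob p b = rhob p' b.
  apply: rhobar_ext => j lj; case: eqP => // nji; apply: h.
  by rewrite ltn_neqAle (introN eqP nji) -ltnS.
by rewrite /F !e.
Qed.

(* The split channel is block diagonal over its classical register, so its
   fidelity is the average over [k] of the overlaps of the two hypotheses. *)
Lemma split_chan_blockdiag b : split_chan W i b =
  blockdiag (fun k : 'I_(2 ^ i) => ((2 ^ i)%:R)^-1 *: rhobar_reg k b).
Proof.
by rewrite /split_chan /blockdiag; apply: eq_bigr => k _; rewrite [RHS]tensmxZr.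
Qed.

Lemma sqrt_fid_split_chan : sqrtC (Fid (split_chan W i)) =
  \sum_(k < 2 ^ i) ((2 ^ i)%:R)^-1 * trnorm (overlap_reg k).
Proof.
rewrite /Fid !split_chan_blockdiag; set c : C := ((2 ^ i)%:R)^-1.
have c0 : 0 <= c by rewrite invr_ge0 ler0n.
have pR k b : psdmx (rhobar_reg k b) by exact: rhobar_psd HW _ _ _.
have pcR k b : psdmx (c *: rhobar_reg k b) by exact: psdZ.
rewrite !sqrtmx_blockdiag // blockdiag_mul.
rewrite (eq_blockdiag (N := fun k => c *: overlap_reg k)) => [|k]; last first.
  rewrite (sqrtmxZ c0 (pR k false)) (sqrtmxZ c0 (pR k true)).
  by rewrite -scalemxAl -scalemxAr scalerA -expr2 sqrtCK.
rewrite trnorm_blockdiag sqrCK; last by apply: sumr_ge0 => k _; exact: trnorm_ge0.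
by apply: eq_bigr => k _; rewrite trnormZ.
Qed.

Lemma avg_err_le_fid :
  ((2 ^ N)%:R)^-1 * \sum_u \tr (err_proj u *m rho W u) <=
  2^-1 * sqrtC (Fid (split_chan W i)).
Proof.
rewrite sum_err_step_err sum_step_err sqrt_fid_split_chan -mulr_sumr.
set S := \sum_(k < 2 ^ i) trnorm (overlap_reg k).
have helstrom_sum : \sum_u helstrom_err u <= (2 ^ (N - i))%:R * S.
  rewrite -sum_trnorm_prefix; apply: ler_sum => u _.
  exact: holevo_helstrom (rhobar_psd HW _ _ _) (rhobar_psd HW _ _ _).
have splitN : (2 ^ N)%:R = (2 ^ (N - i))%:R * (2 ^ i)%:R :> C.
  by rewrite -natrM -expnD subnK // ltnW.
have nz_Ni : (2 ^ (N - i))%:R != 0 :> C by rewrite pnatr_eq0 expn_eq0.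
have nz_i : (2 ^ i)%:R != 0 :> C by rewrite pnatr_eq0 expn_eq0.
have -> : 2^-1 * ((2 ^ i)%:R^-1 * S) =
    ((2 ^ N)%:R)^-1 * (2^-1 * ((2 ^ (N - i))%:R * S)).
  by rewrite splitN; field; rewrite nz_Ni nz_i.
by rewrite ler_wpM2l ?invr_ge0 ?ler0n // ler_wpM2l ?invr_ge0 ?ler0n.
Qed.

End PositionBound.

Lemma le_two_sqrt (C : numClosedFieldType) (x s : C) :
  0 <= s -> x <= 4 * s -> x <= 1 -> x <= 2 * sqrtC s.
Proof.
move=> s0 x4s x1; set t := sqrtC s; have t0 : 0 <= t by rewrite sqrtC_ge0.
have r2t : 2 * t \is Num.real by rewrite ger0_real // mulr_ge0.
case/orP: (real_leVge r2t (real1 C)) => h; last exact: le_trans x1 h.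
apply: le_trans x4s _; rewrite -(sqrtCK s) -/t.
have -> : 4 * t ^+ 2 = (2 * t) * (2 * t) by rewrite expr2; ring.
by rewrite -[X in _ <= X]mulr1 ler_wpM2l // mulr_ge0.
Qed.

Lemma exists_le_avg (C : numClosedFieldType) (T : finType) (t0 : T) (f : T -> C) (b : C) :
  (forall t, f t \is Num.real) -> b \is Num.real -> \sum_t f t <= #|T|%:R * b ->
  exists t, f t <= b.
Proof.
move=> fR bR avg; apply/existsP; apply: contraLR avg; rewrite negb_exists.
move=> /forallP hn; rewrite -real_ltNge ?rpredM ?realn ?rpred_sum //.
have -> : #|T|%:R * b = \sum_(t : T) b by rewrite sumr_const mulr_natl.
apply: ltr_sum => [|t _]; first by apply/hasP; exists t0; rewrite ?mem_index_enum.
by rewrite real_ltNge ?hn.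
Qed.

Section ErrorBound.
Variable C : numClosedFieldType.

Lemma adjmx_foldl m (I : Type) (Pi : I -> 'M[C]_m) (s : seq I) (M0 : 'M[C]_m) :
  (forall i, hermitian (Pi i)) ->
  adjmx (foldl (fun M i => Pi i *m M) M0 s) =
  adjmx M0 *m foldr (fun i M => Pi i *m M) 1%:M s.
Proof.
move=> h; elim: s M0 => [|i s IH] M0 /=; first by rewrite mulmx1.
by rewrite IH adjmxM (h i) mulmxA.
Qed.

Variable d : nat.
Variable W : bool -> 'M[C]_d.
Hypothesis HW : forall x, densitymx (W x).
Variable n : nat.
Local Notation N := (2 ^ n)%N.
Local Notation T := {ffun 'I_N -> bool}.
Variable A : {set 'I_N}.

Lemma dec_proj_projector (u : T) i :
  hermitian (dec_proj W A u i) /\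
  dec_proj W A u i *m dec_proj W A u i = dec_proj W A u i.
Proof.
rewrite /dec_proj; case: (i \in A); last by rewrite /hermitian adjmx1 mulmx1.
set D := (X in nonneg_proj X).
have hD : hermitian D.
  by rewrite /hermitian /D adjmxB !sqrtmx_hermitian //; exact: rhobar_psd.
have hP := nonneg_proj_hermitian hD; have PP := nonneg_proj_idem hD.
case: (u i); split => //; first by rewrite /hermitian adjmxB adjmx1 hP.
by rewrite mulmxBl mul1mx mulmxBr mulmx1 PP subrr subr0.
Qed.

Lemma succ_termE (u : T) :
  succ_term W A u = gram (rho W u) (proj_seq_left W A u) (proj_seq_left W A u).
Proof.
rewrite /succ_term /gram /proj_seq_left adjmx_foldl ?adjmx1 ?mul1mx //.
by move=> i; case: (dec_proj_projector u i).
Qed.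

Lemma succ_term_ge0 (u : T) : 0 <= succ_term W A u.
Proof. by rewrite succ_termE gram_ge0 //; exact: rho_psd. Qed.

(* Gao's bound for one input: only information positions can err. *)
Lemma succ_term_bound (u : T) : 1 - succ_term W A u <=
  4 * \sum_(i in A) \tr (err_proj W A i u *m rho W u).
Proof.
rewrite succ_termE -[X in X - _](rho_tr HW u).
apply: le_trans (gao_bound (rho_psd HW u) (enum 'I_N) (dec_proj_projector u)) _.
rewrite enumT (bigID (mem A)) /= [X in _ + X]big1 ?addr0 => [|i niA]; first exact: lexx.
by rewrite /dec_proj (negbTE niA) subrr mul0mx mxtrace0.
Qed.

Definition fid_sum : C := \sum_(i in A) 2^-1 * sqrtC (Fid (split_chan W i)).

Lemma fid_sum_ge0 : 0 <= fid_sum.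
Proof.
apply: sumr_ge0 => i _; rewrite mulr_ge0 ?invr_ge0 ?ler0n // sqrtC_ge0.
by rewrite /Fid exprn_ge0 // trnorm_ge0.
Qed.

Lemma card_inputs : #|{: T}| = (2 ^ N)%N.
Proof. by rewrite card_ffun card_bool card_ord. Qed.

Lemma PeE K : Pe W K A = ((2 ^ N)%:R)^-1 * \sum_(u : T) (1 - succ_term W A u).
Proof.
rewrite /Pe sumrB sumr_const card_inputs mulrBr mulVf //.
by rewrite pnatr_eq0 expn_eq0.
Qed.

(* [P_e <= 4 s]: average Gao's bound over the inputs, then use the
   position bounds for each [i] in [A]. *)
Lemma Pe_le_fid_sum K : Pe W K A <= 4 * fid_sum.
Proof.
rewrite PeE; apply: le_trans (_ : _ <= ((2 ^ N)%:R)^-1 *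
    \sum_(u : T) 4 * \sum_(i in A) \tr (err_proj W A i u *m rho W u)) _.
  rewrite ler_wpM2l ?invr_ge0 ?ler0n //.
  by apply: ler_sum => u _; exact: succ_term_bound.
rewrite -mulr_sumr mulrCA ler_wpM2l // exchange_big mulr_sumr.
by apply: ler_sum => i iA; exact: avg_err_le_fid.
Qed.

Lemma Pe_le1 K : Pe W K A <= 1.
Proof.
rewrite /Pe lerBlDr lerDl mulr_ge0 ?invr_ge0 ?ler0n //.
by apply: sumr_ge0 => u _; exact: succ_term_ge0.
Qed.

Lemma sum_Pe_frozen K : #|A| = K ->
  \sum_(uf : T) Pe_frozen W K A uf = (2 ^ N)%:R * Pe W K A.
Proof.
move=> HK; have nzN : (2 ^ N)%:R != 0 :> C by rewrite pnatr_eq0 expn_eq0.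
have nzK : (2 ^ K)%:R != 0 :> C by rewrite pnatr_eq0 expn_eq0.
rewrite /Pe_frozen /Pe sumrB sumr_const card_inputs -mulr_sumr.
rewrite (exchange_big_dep xpredT) //=.
have card_frozen (u : T) :
    #|[pred uf : T | [forall k, (k \notin A) ==> (u k == uf k)]]| = (2 ^ K)%N.
  rewrite -HK -(eq_card (fun k => negbK (k \in A))).
  rewrite -(card_agree (fun k => k \notin A) u); apply: eq_card => uf.
  by rewrite !inE; apply: eq_forallb => k; rewrite eq_sym.
under eq_bigr => u _ do rewrite sumr_const card_frozen -mulr_natl.
by rewrite -mulr_sumr mulrA mulVf // mul1r mulrBr mulr1 mulrA mulfV // mul1r.
Qed.

End ErrorBound.

Theorem proposition2 (C : numClosedFieldType) (d : nat) (W : bool -> 'M[C]_d)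
  (HW : forall x : bool, densitymx (W x))
  (n K : nat) (A : {set 'I_(2 ^ n)}) (HK : #|A| = K) :
  Pe W K A <= Pe_bound W A /\
  exists uf : {ffun 'I_(2 ^ n) -> bool}, Pe_frozen W K A uf <= Pe_bound W A.
Proof.
have Pe_bounded : Pe W K A <= Pe_bound W A.
  exact: le_two_sqrt (fid_sum_ge0 W A) (Pe_le_fid_sum HW A K) (Pe_le1 HW A K).
split=> //; apply: (exists_le_avg [ffun=> false]) => [uf||].
- rewrite rpredB ?real1 // ger0_real // mulr_ge0 ?invr_ge0 ?ler0n //.
  by apply: sumr_ge0 => u _; exact: succ_term_ge0.
- by rewrite ger0_real // mulr_ge0 // sqrtC_ge0 fid_sum_ge0.
- by rewrite sum_Pe_frozen // card_inputs ler_wpM2l.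
Qed.
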